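(* Consider the following local network approximation algorithm run by every process in a synchronous system. If, at the end of some round $r$, the graph $A_p|t$ of process $p$ contains the edge $(v\to w)$, then (i) $(v\to w)\in\mathcal{G}^t$, i.e., $A_p|t\subseteq\mathcal{G}^t$; and (ii) $A_p|t$ also contains the edge $(v'\to w)$ for every $v'\in\mathcal{N}_w^t$.
   Context: A finite set $\Pi$ of $n\ge2$ processes computes in synchronous lock-step rounds $r=1,2,\dots$. An adversary fixes an arbitrary infinite sequence of simple directed graphs $\mathcal{G}^1,\mathcal{G}^2,\dots$ on vertex set $\Pi$; $(p\to q)\in\mathcal{G}^r$ iff $q$ receives $p$'s round-$r$ message in round $r$. In each round every process broadcasts one message, received exactly by its out-neighbours in $\mathcal{G}^r$, and then updates its state based on the messages received in that round. Let $\mathcal{N}_p^r=\{q:(q\to p)\in\mathcal{G}^r\}$. Algorithm: each process $p$ maintains a directed graph $A_p=(V_p,E_p)$ without loops or multi-edges whose edges carry labels that are sets of round numbers; initially $A_p=(\{p\},\emptyset)$. In round $r$, $p$ sends its current $A_p$ to all its out-neighbours, and then, for each $q\in\mathcal{N}_p^r$ with received graph $A_q$: if $E_p$ contains an edge $(q\to p)$ with label $T$, its label is replaced by $T\cup\{r\}$, otherwise the edge $(q\to p)$ with label $\{r\}$ is added; and $V_p\leftarrow V_p\cup V_q$. Afterwards, for every pair of distinct nodes $(p_i,p_j)\in V_p\times V_p$, let $T'$ be the union of the labels $S$ of all edges $(p_i\to p_j)$ in the received graphs $A_q$, $q\in\mathcal{N}_p^r$; if $T'\neq\emptyset$, the label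 $T$ of the edge $(p_i\to p_j)$ in $E_p$ is replaced by $T\cup T'$, or the edge $(p_i\to p_j)$ with label $T'$ is added if no such edge exists. For a round $t$, $A_p|t$ denotes the graph whose edges are the edges of $A_p$ whose label contains $t$. *)

From mathcomp Require Import all_boot.
Set Implicit Arguments. Unset Strict Implicit. Unset Printing Implicit Defensive.

(* Communication graphs: G r : rel T, where
   G r p q  means  (p -> q) is an edge of G^r  (q receives p's round-r message).
   Rounds are numbered 1, 2, ...; G 0 is irrelevant. *)

Section Algo.
Variable T : finType.

(* Local graph A_p = (V_p, E_p): E i j = Some lab  iff  the edge (i -> j) is in
   E_p, with label lab (a finite set of round numbers, given as a list; only
   membership matters). *)
Record gstate := GState { gV : {set T}; gE : T -> T -> option (seq nat) }.

Definition init_state (p : T) : gstate := GState [set p] (fun _ _ => None).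

Definition Nin (G : nat -> rel T) (r : nat) (p : T) : {set T} :=
  [set q | G r q p].

(* One round r of process p, given the states [prev] of all processes at the
   start of round r (these are the messages sent in round r). *)
Definition step (G : nat -> rel T) (r : nat) (p : T) (prev : T -> gstate)
  : gstate :=
  let Ap := prev p in
  let N := Nin G r p in
  let V1 := gV Ap :|: \bigcup_(q in N) gV (prev q) in
  let E1 := fun i j =>
    if (j == p) && (i \in N) then Some (odflt [::] (gE Ap i j) ++ [:: r])
    else gE Ap i j in
  let E2 := fun i j =>
    let T' := flatten [seq odflt [::] (gE (prev q) i j) | q <- enum N] in
    if [&& i \in V1, j \in V1, i != j & T' != [::]]
    then Some (odflt [::] (E1 i j) ++ T')
    else E1 i j in
  GState V1 E2.

Fixpoint A (G : nat -> rel T) (r : nat) : T -> gstate :=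
  match r with
  | 0 => init_state
  | r'.+1 => fun p => step G r'.+1 p (A G r')
  end.

(* (v -> w) is an edge of the restricted graph  A|t : its label contains t. *)
Definition restr_edge (a : gstate) (t : nat) (v w : T) : Prop :=
  exists lab, gE a v w = Some lab /\ t \in lab.

End Algo.

From mathcomp Require Import all_boot.
Set Implicit Arguments. Unset Strict Implicit. Unset Printing Implicit Defensive.

(* Every local graph A_p is sound: each round number t on a label of (i -> j)
   certifies that (i -> j) is in G^t, and the label of every edge (v' -> j)
   with v' in N_j^t also carries t.  Soundness is preserved by a round: a
   label t is either freshly created by p for an in-edge (q -> p), in which
   case p records all of N_p^t at once, or copied from a sound neighbour q,
   in which case the labels of all (v' -> j) with v' in N_j^t are copied
   along with it. *)

Definition label (T : finType) (a : gstate T) (i j : T) : seq nat :=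
  odflt [::] (gE a i j).

Lemma restr_edgeE (T : finType) (a : gstate T) t v w :
  restr_edge a t v w <-> t \in label a v w.
Proof.
rewrite /label /restr_edge; split; first by case=> lab [-> ?].
by case: (gE a v w) => [lab|] //= ?; exists lab.
Qed.

Section Step.
Variables (T : finType) (G : nat -> rel T) (r : nat) (p : T).
Variable prev : T -> gstate T.

Lemma mem_gV_step_self x : x \in gV (prev p) -> x \in gV (step G r p prev).
Proof. by rewrite /step inE => ->. Qed.

Lemma mem_gV_step_nbr q x :
  q \in Nin G r p -> x \in gV (prev q) -> x \in gV (step G r p prev).
Proof. by move=> Nq Vx; rewrite /step inE; apply/orP; right; apply/bigcupP; exists q. Qed.

Lemma mem_label_step i j x :
  x \in label (step G r p prev) i j =
  [|| x \in label (prev p) i j, [&& j == p, i \in Nin G r p & x == r] |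
   [&& i \in gV (step G r p prev), j \in gV (step G r p prev), i != j &
      has (fun q => x \in label (prev q) i j) (enum (Nin G r p))]].
Proof.
rewrite /label /step /=.
set N := Nin G r p; set V1 := gV (prev p) :|: _; set T' := flatten _.
have memT' : (x \in T') = has (fun q => x \in odflt [::] (gE (prev q) i j)) (enum N).
  by rewrite /T'; elim: (enum N) => //= q s IH; rewrite mem_cat IH.
have memE1 : x \in odflt [::] (if (j == p) && (i \in N)
      then Some (odflt [::] (gE (prev p) i j) ++ [:: r]) else gE (prev p) i j) =
   (x \in odflt [::] (gE (prev p) i j)) || [&& j == p, i \in N & x == r].
  by case: (j == p); case: (i \in N) => //=; rewrite ?mem_cat ?inE ?orbF.
case: ifP => [/and4P [-> -> -> _]|merge_off] /=.
  by rewrite mem_cat memE1 -memT' orbA.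
rewrite memE1 -memT'; case xT': (x \in T'); last by rewrite !andbF orbF.
have T'_nil : T' != [::] by apply/eqP => T'0; rewrite T'0 in xT'.
by rewrite T'_nil in merge_off; rewrite merge_off orbF.
Qed.

End Step.

Definition sound (T : finType) (G : nat -> rel T) (a : gstate T) : Prop :=
  forall i j x, x \in label a i j ->
    [/\ i \in gV a, j \in gV a, G x i j &
        forall v', G x v' j -> x \in label a v' j].

Lemma sound_step (T : finType) (G : nat -> rel T) r p (prev : T -> gstate T) :
  (forall t, irreflexive (G t)) ->
  (forall q, q \in gV (prev q) /\ sound G (prev q)) ->
  sound G (step G r p prev).
Proof.
move=> Girr prev_ok i j x.
have [Vp sound_p] := prev_ok p.
rewrite mem_label_step => /or3P
  [old | /and3P [/eqP-> Ni /eqP->] | /and4P [Vi Vj _ /hasP [q Nq xq]]].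
- have [Vi Vj Gx closed] := sound_p _ _ _ old.
  split=> //; try exact: mem_gV_step_self.
  by move=> v' Gv'; rewrite mem_label_step closed.
- have Gip : G r i p by rewrite inE in Ni.
  split=> //; first by apply: (mem_gV_step_nbr Ni); case: (prev_ok i).
    exact: mem_gV_step_self.
  by move=> v' Gv'; rewrite mem_label_step eqxx inE Gv' eqxx orbT.
- rewrite mem_enum in Nq.
  have [_ sound_q] := prev_ok q.
  have [_ _ Gx closed] := sound_q _ _ _ xq.
  split=> // v' Gv'.
  have xv' := closed _ Gv'.
  have [Vv' _ _ _] := sound_q _ _ _ xv'.
  (* the copy of (v' -> j) needs v' != j, which irreflexivity of G^x gives *)
  have v'j : v' != j by apply: contraTneq Gv' => ->; rewrite Girr.
  rewrite mem_label_step (mem_gV_step_nbr Nq Vv') Vj v'j /=.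
  by rewrite (introT hasP) ?orbT //; exists q; rewrite ?mem_enum.
Qed.

Lemma sound_A (T : finType) (G : nat -> rel T) :
  (forall t, irreflexive (G t)) ->
  forall r p, p \in gV (A G r p) /\ sound G (A G r p).
Proof.
move=> Girr; elim=> [|r IH] p; first by rewrite /= inE.
split; first by apply: mem_gV_step_self; case: (IH p).
exact: sound_step.
Qed.

Theorem lemma7 (T : finType) (G : nat -> rel T)
  (hn : 2 <= #|T|)
  (hsimple : forall r, irreflexive (G r))
  (r : nat) (p : T) (t : nat) (v w : T) :
  restr_edge (A G r p) t v w ->
  G t v w /\ (forall v', v' \in Nin G t w -> restr_edge (A G r p) t v' w).
Proof.
move/restr_edgeE=> tvw.
have [_ sound_p] := sound_A hsimple r p.
have [_ _ Gvw closed] := sound_p _ _ _ tvw.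
by split=> // v' Nv'; apply/restr_edgeE/closed; rewrite inE in Nv'.
Qed.
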